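(* Let $\alpha\ge1$. Any outcome that satisfies $\alpha$-proportional fairness is in the $\left(\gamma,\frac{\gamma(\alpha+1)}{\gamma-1}\right)$-transferable core for every $\gamma>1$.
   Context: Let $(\mathcal X,d)$ be a metric space, $N=[n]$ a set of agents and $C$ a set of candidates located in $\mathcal X$, $k\in\mathbb N^+$; an outcome is $W\subseteq C$ with $|W|\le k$; $d(i,W)=\min_{c\in W}d(i,c)$. $\alpha$-proportional fairness: there is no group $N'\subseteq N$ with $|N'|\ge n/k$ and candidate $c\in C\setminus W$ such that $\alpha\, d(i,c)<d(i,W)$ for all $i\in N'$. $(\gamma,\alpha)$-transferable core: $W$ is in it if there is no group $N'\subseteq N$ and candidate $c\in C\setminus W$ with $|N'|\ge\gamma n/k$ and $\alpha\sum_{i\in N'}d(i,c)<\sum_{i\in N'}d(i,W)$. *)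

From mathcomp Require Import all_boot all_order all_algebra.
Set Implicit Arguments. Unset Strict Implicit. Unset Printing Implicit Defensive.
Import Order.TTheory GRing.Theory Num.Theory.
Local Open Scope ring_scope.

Definition is_metric (R : realFieldType) (X : Type) (d : X -> X -> R) : Prop :=
  [/\ (forall x y, 0 <= d x y),
      (forall x y, d x y = 0 <-> x = y),
      (forall x y, d x y = d y x) &
      (forall x y z, d x z <= d x y + d y z)].

(* d(i, W) = min_{c in W} d(i, c), for a nonempty W (0 returned for W = set0,
   never used: the theorem assumes W nonempty). *)
Definition dist_set (R : realFieldType) (X : Type) (d : X -> X -> R)
  (A C : finType) (agent : A -> X) (cand : C -> X) (W : {set C}) (i : A) : R :=
  match [pick c in W] with
  | Some c0 => \big[Order.min/d (agent i) (cand c0)]_(c in W) d (agent i) (cand c)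
  | None => 0
  end.

Definition prop_fair (R : realFieldType) (X : Type) (d : X -> X -> R)
  (A C : finType) (agent : A -> X) (cand : C -> X) (k : nat) (alpha : R)
  (W : {set C}) : Prop :=
  ~ exists (N' : {set A}) (c : C),
      [/\ (#|A|%:R / k%:R <= (#|N'|%:R : R)), c \notin W &
          forall i, i \in N' ->
            alpha * d (agent i) (cand c) < dist_set d agent cand W i].

Definition transferable_core (R : realFieldType) (X : Type) (d : X -> X -> R)
  (A C : finType) (agent : A -> X) (cand : C -> X) (k : nat) (gamma alpha : R)
  (W : {set C}) : Prop :=
  ~ exists (N' : {set A}) (c : C),
      [/\ (gamma * #|A|%:R / k%:R <= (#|N'|%:R : R)), c \notin W &
          alpha * (\sum_(i in N') d (agent i) (cand c))
            < \sum_(i in N') dist_set d agent cand W i].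

From mathcomp Require Import all_boot all_order all_algebra.
From mathcomp Require Import ring lra.
Set Implicit Arguments. Unset Strict Implicit. Unset Printing Implicit Defensive.
Import Order.TTheory GRing.Theory Num.Theory.
Local Open Scope ring_scope.

(* Suppose a group N' of size at least gamma n / k would jointly prefer c to W
   by the factor beta = gamma (alpha + 1) / (gamma - 1).  By alpha-proportional
   fairness fewer than n / k of its members (the set S) prefer c by the factor
   alpha, so the remaining members T outnumber S by the factor gamma - 1.  Each
   j in T satisfies d(j, W) <= alpha d(j, c); an agent i in S can detour through
   the member j of T closest to c, so d(i, W) <= d(i, c) + (1 + alpha) d(j, c),
   and the surplus (1 + alpha) d(j, c), summed over S, is paid for by
   (1 + alpha) / (gamma - 1) times the total distance of T to c. *)

Section DistanceToOutcome.

Variables (R : realFieldType) (X : Type) (d : X -> X -> R) (A C : finType).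
Variables (agent : A -> X) (cand : C -> X) (W : {set C}).

Local Notation dist := (dist_set d agent cand W).

Lemma dist_set_le i w : w \in W -> dist i <= d (agent i) (cand w).
Proof.
move=> wW; rewrite /dist_set; case: pickP => [c0 _|/(_ w)]; last by rewrite wW.
exact: bigmin_le_cond.
Qed.

Lemma dist_set_attained i :
  W != set0 -> exists2 w, w \in W & dist i = d (agent i) (cand w).
Proof.
case/set0Pn=> w0 w0W; rewrite /dist_set.
case: pickP => [c0 c0W|/(_ w0)]; last by rewrite w0W.
case: (arg_minP (fun w => d (agent i) (cand w)) c0W) => w wW w_min.
exists w => //; apply/le_anti; rewrite bigmin_le_cond //=.
by apply/bigmin_geP; split=> [|v /w_min //]; apply: w_min.
Qed.

Lemma dist_set_le_detour i j c : is_metric d -> W != set0 ->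
  dist i <= d (agent i) (cand c) + d (agent j) (cand c) + dist j.
Proof.
case=> _ _ d_sym d_tri /(dist_set_attained j) [w wW ->].
apply: le_trans (dist_set_le i wW) _.
have := d_tri (agent i) (cand c) (cand w).
have := d_tri (cand c) (agent j) (cand w).
rewrite (d_sym (cand c) (agent j)); lra.
Qed.

Lemma prop_fair_card_lt k alpha c (S : {set A}) :
  prop_fair d agent cand k alpha W -> c \notin W ->
  (forall i, i \in S -> alpha * d (agent i) (cand c) < dist i) ->
  (#|S|%:R : R) < #|A|%:R / k%:R.
Proof.
by move=> fair cW S_pref; rewrite ltNge; apply/negP=> S_large; apply: fair; exists S, c.
Qed.

End DistanceToOutcome.

Lemma detour_cost_le (R : realFieldType) (alpha gamma a b m s t : R) :
  0 <= alpha -> 1 < gamma -> 0 <= a -> 0 <= b -> 0 <= m ->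
  (gamma - 1) * s <= t -> t * m <= b ->
  a + s * ((1 + alpha) * m) + alpha * b
    <= gamma * (alpha + 1) / (gamma - 1) * (a + b).
Proof.
move=> alpha_ge0 gamma_gt1 a_ge0 b_ge0 m_ge0 st tmb.
have gamma1_gt0 : 0 < gamma - 1 by lra.
have surplus : (gamma - 1) * s * ((1 + alpha) * m) <= (1 + alpha) * b.
  apply: (@le_trans _ _ (t * ((1 + alpha) * m))).
    by apply: ler_wpM2r => //; apply: mulr_ge0 => //; lra.
  by rewrite mulrCA ler_wpM2l //; lra.
have beta_eq : (gamma - 1) * (gamma * (alpha + 1) / (gamma - 1)) = gamma * (alpha + 1).
  by rewrite mulrC mulfVK // gt_eqF.
rewrite -(ler_pM2l gamma1_gt0) [X in _ <= X]mulrA beta_eq.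
(* what remains after using [surplus] is this slack *)
have : 0 <= (alpha * gamma + 1) * a + (gamma - 1) * b.
  by apply: addr_ge0; apply: mulr_ge0 => //; nra.
move: surplus; rewrite !mulrDr; lra.
Qed.

Lemma sum_dist_set_le (R : realFieldType) (X : Type) (d : X -> X -> R)
  (A C : finType) (agent : A -> X) (cand : C -> X) (k : nat)
  (alpha gamma : R) (W : {set C}) (N' : {set A}) (c : C) :
  is_metric d -> 0 <= alpha -> W != set0 -> prop_fair d agent cand k alpha W ->
  1 < gamma -> gamma * #|A|%:R / k%:R <= #|N'|%:R -> c \notin W ->
  \sum_(i in N') dist_set d agent cand W i
    <= gamma * (alpha + 1) / (gamma - 1) * \sum_(i in N') d (agent i) (cand c).
Proof.
move=> d_metric alpha_ge0 W_neq0 fair gamma_gt1 N'_large cW.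
have d_ge0 x y : 0 <= d x y by case: d_metric.
set dist := dist_set d agent cand W; pose dc i := d (agent i) (cand c).
set S := [set i in N' | alpha * dc i < dist i]; set T := N' :\: S.
have S_sub : S \subset N' by apply/subsetP=> i; rewrite inE => /andP[].
have S_small : (#|S|%:R : R) < #|A|%:R / k%:R.
  by apply: (prop_fair_card_lt fair cW) => i; rewrite inE => /andP[].
have T_large : (gamma - 1) * #|S|%:R < #|T|%:R.
  have : gamma * #|S|%:R < #|S|%:R + #|T|%:R.
    rewrite -natrD -{2}(setIidPr S_sub) cardsID; apply: lt_le_trans N'_large.
    by rewrite -mulrA ltr_pM2l //; lra.
  lra.
have [j0 j0T] : exists j0, j0 \in T.
  apply/set0Pn; rewrite -card_gt0 -(ltr0n R); apply: le_lt_trans T_large.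
  by apply: mulr_ge0 => //; lra.
case: (arg_minP dc j0T) => j jT j_min.
have dist_T i : i \in T -> dist i <= alpha * dc i.
  by rewrite !inE negb_and => /andP[/orP[/negP //|]]; rewrite -leNgt.
have dist_S i : dist i <= dc i + (1 + alpha) * dc j.
  have := dist_set_le_detour agent cand i j c d_metric W_neq0; have := dist_T j jT.
  rewrite -/dist -/(dc i) -/(dc j); lra.
rewrite (big_setID S) [X in _ <= _ * X](big_setID S) (setIidPr S_sub) -/T /=.
apply: le_trans (detour_cost_le alpha_ge0 gamma_gt1 _ _ (d_ge0 (agent j) (cand c))
                    (ltW T_large) _).
- apply: lerD; last by rewrite mulr_sumr; apply: ler_sum.
  by rewrite mulr_natl -sumr_const -big_split; apply: ler_sum.
- exact: sumr_ge0.
- exact: sumr_ge0.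
- by rewrite mulr_natl -sumr_const; apply: ler_sum.
Qed.

Theorem theorem3 (R : realFieldType) (X : Type) (d : X -> X -> R)
  (A C : finType) (agent : A -> X) (cand : C -> X) (k : nat)
  (alpha : R) (W : {set C}) :
  is_metric d -> (0 < k)%N -> 1 <= alpha ->
  W != set0 -> (#|W| <= k)%N ->
  prop_fair d agent cand k alpha W ->
  forall gamma : R, 1 < gamma ->
    transferable_core d agent cand k gamma (gamma * (alpha + 1) / (gamma - 1)) W.
Proof.
move=> d_metric _ alpha_ge1 W_neq0 _ fair gamma gamma_gt1 [N' [c [N'_large cW]]].
apply/negP; rewrite -leNgt.
apply: (sum_dist_set_le d_metric _ W_neq0 fair gamma_gt1 N'_large cW); lra.
Qed.
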